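(* For all $n\ge1$, $$a_{\{0102,0112,0120\}}(n)=a_{\{0102,0112,0121\}}(n)=a_{\{0112,0120,0121\}}(n)=2^{n-1}+\binom{n}{3}.$$
   Context: An ascent in an integer sequence $s_1\cdots s_m$ is an index $j$ with $s_j<s_{j+1}$; $\mathrm{asc}$ denotes the number of ascents. An ascent sequence is a sequence $x_1\cdots x_n$ of nonnegative integers with $x_1=0$ and $x_i\le 1+\mathrm{asc}(x_1\cdots x_{i-1})$ for all $i\ge2$. The reduction $\mathrm{red}(w)$ of an integer sequence $w$ replaces the $i$-th smallest distinct letter of $w$ by $i-1$; a pattern is a reduced sequence. A sequence $x$ contains a pattern $p=p_1\cdots p_k$ if there are indices $i_1<\cdots<i_k$ with $\mathrm{red}(x_{i_1}\cdots x_{i_k})=p$; otherwise $x$ avoids $p$. For a finite set $P$ of patterns, $a_P(n)$ denotes the number of ascent sequences of length $n$ avoiding every pattern in $P$. *)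

From mathcomp Require Import all_boot.
Set Implicit Arguments. Unset Strict Implicit. Unset Printing Implicit Defensive.

Fixpoint asc (s : seq nat) : nat :=
  match s with
  | a :: ((b :: _) as t) => (a < b) + asc t
  | _ => 0
  end.

Definition is_ascent_seq (x : seq nat) : bool :=
  (head 1 x == 0) &&
  [forall i : 'I_(size x), (0 < i) ==> (nth 0 x i <= (asc (take i x)).+1)].

Definition red (w : seq nat) : seq nat :=
  map (fun a => index a (sort leq (undup w))) w.

Definition contains (x p : seq nat) : bool :=
  [exists m : (size x).-tuple bool, red (mask m x) == p].

Definition avoids (x p : seq nat) : bool := ~~ contains x p.

(* a_P(n): ascent sequences of length n avoiding every pattern of P.
   Entries of an ascent sequence of length n are < n, so tuples over 'I_n
   enumerate all of them. *)
Definition a_P (P : seq (seq nat)) (n : nat) : nat :=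
  #|[set t : n.-tuple 'I_n |
      is_ascent_seq (map val t) && all (avoids (map val t)) P]|.

From mathcomp Require Import all_boot zify.
Set Implicit Arguments. Unset Strict Implicit. Unset Printing Implicit Defensive.

(* Every pattern involved has three distinct letters, so the 2^(n-1) binary
   sequences 0w are all counted. Building avoiders letter by letter, the
   non-binary ones are forced into a few rigid shapes (for the first set,
   0^a 1 2 ... k k^b (k-1)^c), and whether a letter may be appended depends
   only on a label recording the current shape and its top letter k. This
   gives a generating tree whose succession rule on labels does not involve
   k; counting its nodes at depth n-1 gives 2^(n-1) + C(n,3), the binomial
   counting the a >= 1, k >= 2, b, c >= 0 with a + k + b + c = n. *)

(** * Reduction of four-letter words *)

Definition letters (w : seq nat) : seq nat := sort leq (undup w).

Lemma mem_letters (w : seq nat) : letters w =i w.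
Proof. by move=> x; rewrite mem_sort mem_undup. Qed.

Lemma letters_sorted w : sorted ltn (letters w).
Proof.
rewrite ltn_sorted_uniq_leq sort_uniq undup_uniq.
exact: (sort_sorted leq_total).
Qed.

Lemma letters_eq (w l : seq nat) : sorted ltn l -> w =i l -> letters w = l.
Proof.
move=> sl wl; apply: (irr_sorted_eq ltn_trans ltnn) => // [|x].
  exact: letters_sorted.
by rewrite mem_letters wl.
Qed.

Lemma index_letters_ltn (w : seq nat) : {in w &, forall x y,
  (index x (letters w) < index y (letters w)) = (x < y)}.
Proof.
move=> x y; rewrite -!(mem_letters w) => xw yw.
have sw := letters_sorted w.
apply/idP/idP => [/(sorted_ltn_index ltn_trans sw x y xw yw) //|xy].
rewrite ltnNge leq_eqVlt negb_or; apply/andP; split.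
  by apply: contraTneq xy => /(index_inj 0 yw xw) ->; rewrite ltnn.
by apply/negP => /(sorted_ltn_index ltn_trans sw y x yw xw); rewrite ltnNge ltnW.
Qed.

Lemma red_ltn (w : seq nat) i j : i < size w -> j < size w ->
  (nth 0 (red w) i < nth 0 (red w) j) = (nth 0 w i < nth 0 w j).
Proof.
by move=> iw jw; rewrite !(nth_map 0) // index_letters_ltn ?mem_nth.
Qed.

Lemma red_3letters x y z (w : seq nat) : x < y < z -> w =i [:: x; y; z] ->
  red w = [seq (y <= u) + (z <= u) | u <- w].
Proof.
move=> /andP [xy yz] wxyz; rewrite /red -/(letters w) (letters_eq _ wxyz) /=;
  last by rewrite xy yz.
apply/eq_in_map => u; rewrite wxyz !inE => /or3P [] /eqP ->;
  rewrite /= ?eqxx ?(ltn_eqF xy) ?(ltn_eqF (ltn_trans xy yz)) ?(ltn_eqF yz); lia.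
Qed.

Lemma red_0102 a b c d :
  (red [:: a; b; c; d] == [:: 0; 1; 0; 2]) = [&& a == c, a < b & b < d].
Proof.
apply/eqP/idP => [E | /and3P [/eqP <- ab bd]].
  have lt := @red_ltn [:: a; b; c; d]; rewrite E in lt.
  by move: (lt 0 1 isT isT) (lt 1 3 isT isT) (lt 0 2 isT isT) (lt 2 0 isT isT) => /=; lia.
rewrite (@red_3letters a b d) ?ab ?bd //; last by move=> u; rewrite !inE; lia.
by apply/eqP; rewrite /= !eqseq_cons eqxx andbT; lia.
Qed.

Lemma red_0112 a b c d :
  (red [:: a; b; c; d] == [:: 0; 1; 1; 2]) = [&& a < b, b == c & c < d].
Proof.
apply/eqP/idP => [E | /and3P [ab /eqP <- bd]].
  have lt := @red_ltn [:: a; b; c; d]; rewrite E in lt.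
  by move: (lt 0 1 isT isT) (lt 2 3 isT isT) (lt 1 2 isT isT) (lt 2 1 isT isT) => /=; lia.
rewrite (@red_3letters a b d) ?ab ?bd //; last by move=> u; rewrite !inE; lia.
by apply/eqP; rewrite /= !eqseq_cons eqxx andbT; lia.
Qed.

Lemma red_0120 a b c d :
  (red [:: a; b; c; d] == [:: 0; 1; 2; 0]) = [&& a == d, a < b & b < c].
Proof.
apply/eqP/idP => [E | /and3P [/eqP <- ab bc]].
  have lt := @red_ltn [:: a; b; c; d]; rewrite E in lt.
  by move: (lt 0 1 isT isT) (lt 1 2 isT isT) (lt 0 3 isT isT) (lt 3 0 isT isT) => /=; lia.
rewrite (@red_3letters a b c) ?ab ?bc //; last by move=> u; rewrite !inE; lia.
by apply/eqP; rewrite /= !eqseq_cons eqxx andbT; lia.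
Qed.

Lemma red_0121 a b c d :
  (red [:: a; b; c; d] == [:: 0; 1; 2; 1]) = [&& a < b, b == d & b < c].
Proof.
apply/eqP/idP => [E | /and3P [ab /eqP <- bc]].
  have lt := @red_ltn [:: a; b; c; d]; rewrite E in lt.
  by move: (lt 0 1 isT isT) (lt 1 2 isT isT) (lt 1 3 isT isT) (lt 3 1 isT isT) => /=; lia.
rewrite (@red_3letters a b c) ?ab ?bc //; last by move=> u; rewrite !inE; lia.
by apply/eqP; rewrite /= !eqseq_cons eqxx andbT; lia.
Qed.

Lemma subseq_rcons2 (T : eqType) (w s : seq T) v :
  subseq w s -> subseq (rcons w v) (rcons s v).
Proof. by rewrite -!cats1 subseq_cat2r. Qed.

Lemma subseq_rcons_r (T : eqType) (w s : seq T) v : subseq w s -> subseq w (rcons s v).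
Proof. by move/subseq_trans; apply; exact: subseq_rcons. Qed.

Lemma all_subseq3 (T : eqType) (p : pred T) (s : seq T) a b c :
  all p s -> subseq [:: a; b; c] s -> [&& p a, p b & p c].
Proof.
by move=> ps; rewrite -(all_filterP ps) subseq_filter /= andbT => /andP [].
Qed.

Lemma subseq_rcons_cases (w s : seq nat) v : subseq w (rcons s v) ->
  subseq w s \/ exists2 w', w = rcons w' v & subseq w' s.
Proof.
case/lastP: w => [_ | w x]; first by left; exact: sub0seq.
rewrite -subseq_rev !rev_rcons /=; case: eqP => [-> | _].
  by rewrite subseq_rev; right; exists w.
by rewrite -rev_rcons subseq_rev; left.
Qed.

Lemma containsP x p : reflect (exists2 w, subseq w x & red w = p) (contains x p).
Proof.
apply: (iffP existsP) => [[m /eqP <-] | [w /subseqP [m sm ->] <-]].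
  by exists (mask m x); first exact: mask_subseq.
have sm' : size m == size x by rewrite sm.
by exists (Tuple sm').
Qed.

Lemma contains_rcons x v p : contains (rcons x v) p <->
  contains x p \/ exists2 w, subseq w x & red (rcons w v) = p.
Proof.
split.
  case/containsP => w /subseq_rcons_cases [wx | [w' -> w'x]] <-; last by right; exists w'.
  by left; apply/containsP; exists w.
case=> [/containsP [w wx <-] | [w wx <-]]; apply/containsP.
  by exists w => //; exact: subseq_rcons_r.
by exists (rcons w v) => //; exact: subseq_rcons2.
Qed.

Lemma avoids_rcons x v p : size p = 4 -> avoids (rcons x v) p <->
  avoids x p /\ forall a b c, subseq [:: a; b; c] x -> red [:: a; b; c; v] != p.
Proof.
rewrite /avoids => p4; split => [/negP xvp | [/negP xp abc]].
  split=> [|a b c sx]; apply/negP => E; apply: xvp; apply/contains_rcons.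
    by left.
  by right; exists [:: a; b; c]; last exact/eqP.
apply/negP => /contains_rcons [// | [w wx wp]].
have := congr1 size wp; rewrite size_map size_rcons p4.
case: w wx wp => [|a [|b [|c []]]] // wx wp _.
by move/eqP: (abc a b c wx).
Qed.

Lemma asc_cons2 a b s : asc [:: a, b & s] = (a < b) + asc (b :: s).
Proof. by []. Qed.

Lemma asc_rcons (s : seq nat) v : s != [::] ->
  asc (rcons s v) = asc s + (last 0 s < v).
Proof.
case: s => // a s _; elim: s a => [|b s IH] a; first by rewrite /= addn0.
by rewrite !rcons_cons asc_cons2 -rcons_cons IH asc_cons2 addnA.
Qed.

Lemma asc_ltn_size (s : seq nat) : s != [::] -> asc s < size s.
Proof.
case: s => // a s _; elim: s a => [|b s IH] a //.
by have := IH b; rewrite asc_cons2 /=; lia.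
Qed.

Lemma is_ascent_seqE (x : seq nat) : is_ascent_seq x = (head 1 x == 0) &&
  all (fun i => (0 < i) ==> (nth 0 x i <= (asc (take i x)).+1)) (iota 0 (size x)).
Proof.
congr (_ && _); apply/forallP/allP => ok i; last by apply: ok; rewrite mem_iota ltn_ord.
by rewrite mem_iota => /andP [_ lti]; exact: ok (Ordinal lti).
Qed.

Lemma is_ascent_seq_rcons (s : seq nat) v : s != [::] ->
  is_ascent_seq (rcons s v) = is_ascent_seq s && (v <= (asc s).+1).
Proof.
move=> s0; have s_gt0 : 0 < size s by case: s s0.
rewrite !is_ascent_seqE (_ : head 1 (rcons s v) = head 1 s); last by case: s s0 s_gt0.
rewrite size_rcons -[(size s).+1]addn1 iotaD all_cat /= andbT.
rewrite s_gt0 nth_rcons ltnn eqxx -cats1 take_size_cat // andbA; congr (_ && _ && _).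
apply: eq_in_all => i; rewrite mem_iota => /andP [_ lti].
by rewrite nth_cat lti takel_cat // ltnW.
Qed.

Lemma ascent_seq_ltn_size (s : seq nat) x : is_ascent_seq s -> x \in s -> x < size s.
Proof.
elim/last_ind: s x => [// | s v IH] x.
have [-> | s0] := eqVneq s [::].
  by rewrite /is_ascent_seq /= => /andP [/eqP -> _]; rewrite inE => /eqP ->.
rewrite is_ascent_seq_rcons // size_rcons mem_rcons inE => /andP [ss vs] /orP [/eqP -> | xs].
  by have := asc_ltn_size s0; lia.
exact: ltn_trans (IH x ss xs) (ltnSn _).
Qed.

Definition ascent_avoider (P : seq (seq nat)) (s : seq nat) : bool :=
  is_ascent_seq s && all (avoids s) P.

Definition extendable (P : seq (seq nat)) (s : seq nat) (v : nat) : Prop :=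
  v <= (asc s).+1 /\
  forall a b c, subseq [:: a; b; c] s -> red [:: a; b; c; v] \notin P.

Lemma ascent_avoider_nonnil P s : ascent_avoider P s -> s != [::].
Proof. by case: s. Qed.

Lemma ascent_avoider_rcons P s v : all (fun p => size p == 4) P -> s != [::] ->
  ascent_avoider P (rcons s v) <-> ascent_avoider P s /\ extendable P s v.
Proof.
move=> /allP P4 s0; have avP p (pP : p \in P) := avoids_rcons s v (eqP (P4 p pP)).
rewrite /ascent_avoider is_ascent_seq_rcons //; split.
  case/andP => /andP [-> vs] /allP av; split=> //=.
    by apply/allP => p pP; exact: ((avP p pP).1 (av p pP)).1.
  split=> // a b c sabc; apply/negP => rP.
  by move/eqP: (((avP _ rP).1 (av _ rP)).2 a b c sabc).
case=> /andP [-> /allP av] [vs abc] /=; rewrite vs; apply/allP => p pP.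
apply/(avP p pP); split; first exact: av.
by move=> a b c /abc; apply: contraNneq => ->.
Qed.

Lemma ascent_avoider_catl P s w : all (fun p => size p == 4) P ->
  ascent_avoider P (s ++ w) -> s != [::] -> ascent_avoider P s.
Proof.
move=> P4; elim/last_ind: w => [|w v IH]; first by rewrite cats0.
rewrite -rcons_cat => /ascent_avoider_rcons av s0; apply: IH => //.
by apply: (av P4 _).1; case: (s) s0.
Qed.

Lemma ascent_avoider0 P : all (fun p => size p == 4) P -> ascent_avoider P [:: 0].
Proof.
move=> /allP P4; rewrite /ascent_avoider is_ascent_seqE /=.
apply/allP => p /P4 /eqP p4; apply/negP => /containsP [w /size_subseq w1 wp].
by move: w1; rewrite -(size_map (index^~ (letters w)) w) -/(red w) wp p4.
Qed.

Lemma prefix0_ascent_avoider P s : ascent_avoider P s -> prefix [:: 0] s.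
Proof. by case: s => // a s /andP [/andP [/eqP /= -> _] _]; rewrite prefix0s. Qed.

(** * Generating trees *)

Fixpoint level_size (trans : nat -> seq nat) (t n : nat) : nat :=
  if n is m.+1 then sumn [seq level_size trans u m | u <- trans t] else 1.

Lemma level_size_loop trans t n : trans t = [:: t] -> level_size trans t n = 1.
Proof. by move=> tt; elim: n => //= n; rewrite tt /= addn0. Qed.

Lemma level_size_double trans t n : trans t = [:: t; t] -> level_size trans t n = 2 ^ n.
Proof. by move=> tt; elim: n => //= n; rewrite tt /= addn0 expnS => ->; lia. Qed.

Lemma level_size_root trans n : trans 0 = [:: 0; 1] ->
  (forall m, level_size trans 1 m = 2 ^ m + 'C(m.+1, 2)) ->
  level_size trans 0 n = 2 ^ n + 'C(n.+1, 3).
Proof.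
move=> t0 t1; elim: n => //= n; rewrite t0 /= t1 addn0 => ->.
by rewrite [in RHS]binS expnS; lia.
Qed.

Lemma uniq_flatten_keyed (A B K : eqType) (l : seq A) (f : A -> seq B)
    (ka : A -> K) (kb : B -> K) :
  uniq (map ka l) -> {in l, forall a, uniq (f a) /\ {in f a, forall b, kb b = ka a}} ->
  uniq (flatten (map f l)).
Proof.
elim: l => [// | a l IH] /= /andP [al ul] fl.
have [ufa kfa] := fl a (mem_head a l).
rewrite cat_uniq ufa IH ?andbT // => [|a' a'l]; last by apply: fl; rewrite inE a'l orbT.
apply/hasPn => b /flatten_mapP [a' a'l ba']; apply/negP => bfa.
have [_ kfa'] := fl a' (mem_behead (s := a :: l) a'l).
by move: al; rewrite -(kfa b bfa) (kfa' b ba') map_f.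
Qed.

Lemma nth_prefix_rcons (T : eqType) (x0 : T) s t v :
  prefix (rcons s v) t -> nth x0 t (size s) = v.
Proof. by case/prefixP => w ->; rewrite nth_cat size_rcons ltnSn nth_rcons ltnn eqxx. Qed.

Section GeneratingTree.

Variables (S : eqType) (P : seq (seq nat)).
Variables (inv : seq nat -> S -> Prop) (succ : S -> seq (nat * S)).
Hypothesis P4 : all (fun p => size p == 4) P.
Hypothesis succP : forall s st v, inv s st -> extendable P s v <-> v \in map fst (succ st).
Hypothesis inv_succ : forall s st q, inv s st -> q \in succ st -> inv (rcons s q.1) q.2.
Hypothesis succ_uniq : forall s st, inv s st -> uniq (map fst (succ st)).

Fixpoint grow (n : nat) (s : seq nat) (st : S) : seq (seq nat) :=
  if n is m.+1 then flatten [seq grow m (rcons s q.1) q.2 | q <- succ st] else [:: s].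

Lemma avoider_succ s st q : inv s st -> ascent_avoider P s -> q \in succ st ->
  ascent_avoider P (rcons s q.1).
Proof.
move=> ist av qs; apply/(ascent_avoider_rcons _ P4 (ascent_avoider_nonnil av)).
by split=> //; apply/(succP _ ist); exact: map_f.
Qed.

Lemma mem_grow n s st t : inv s st -> ascent_avoider P s ->
  (t \in grow n s st) = [&& ascent_avoider P t, size t == size s + n & prefix s t].
Proof.
elim: n s st => [|n IH] s st ist av /=.
  rewrite inE addn0; apply/eqP/and3P => [-> | [_ /eqP st_s /prefixP [w tE]]].
    by rewrite av prefix_refl.
  move: st_s; rewrite tE size_cat -[RHS]addn0 => /addnI /eqP.
  by rewrite size_eq0 => /eqP ->; rewrite cats0.
apply/flatten_mapP/and3P => [[q qs] | [avt /eqP st_s /prefixP [w tE]]].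
  rewrite (IH _ _ (inv_succ ist qs) (avoider_succ ist av qs)) size_rcons addSnnS.
  by case/and3P => -> -> /(prefix_trans (prefix_rcons s q.1)).
case: w tE st_s => [|v w] tE; first by rewrite tE cats0; lia.
have avv : ascent_avoider P (rcons s v).
  apply: (ascent_avoider_catl (w := w) P4); last by rewrite -size_eq0 size_rcons.
  by rewrite cat_rcons -tE.
have /mapP [q qs vq] : v \in map fst (succ st).
  apply/(succP _ ist).
  by case/(ascent_avoider_rcons _ P4 (ascent_avoider_nonnil av)): avv.
exists q => //; rewrite (IH _ _ (inv_succ ist qs) (avoider_succ ist av qs)).
by rewrite -vq avt size_rcons st_s addSnnS eqxx tE -cat_rcons prefix_prefix.
Qed.

Lemma grow_uniq n s st : inv s st -> ascent_avoider P s -> uniq (grow n s st).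
Proof.
elim: n s st => [// | n IH] s st ist av /=.
apply: (uniq_flatten_keyed (ka := fst) (kb := fun t => nth 0 t (size s))) => [|q qs].
  exact: succ_uniq ist.
have [ist' av'] := (inv_succ ist qs, avoider_succ ist av qs).
split=> [|t]; first exact: IH.
by rewrite mem_grow // => /and3P [_ _ /nth_prefix_rcons].
Qed.

Variables (lab : S -> nat) (trans : nat -> seq nat).
Hypothesis lab_succ : forall st, [seq lab q.2 | q <- succ st] = trans (lab st).

Lemma size_grow n s st : size (grow n s st) = level_size trans (lab st) n.
Proof.
elim: n s st => [// | n IH] s st /=.
rewrite size_flatten /shape -map_comp -lab_succ -map_comp.
by congr sumn; apply: eq_map => q /=; exact: IH.
Qed.

Variable st0 : S.
Hypothesis inv0 : inv [:: 0] st0.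

Lemma a_P_level n : a_P P n.+1 = level_size trans (lab st0) n.
Proof.
rewrite -(size_grow n [:: 0]) /a_P cardE.
rewrite -(size_map (fun t : n.+1.-tuple 'I_n.+1 => map val t)).
apply/perm_size/uniq_perm.
- rewrite map_inj_uniq ?enum_uniq // => t1 t2 /(inj_map val_inj) eq12.
  exact: val_inj.
- exact: grow_uniq (ascent_avoider0 P4).
move=> s; rewrite mem_grow ?ascent_avoider0 //; apply/mapP/idP.
  case=> t; rewrite mem_enum inE /= => avt ->.
  have avt' : ascent_avoider P (map val t) := avt.
  by rewrite avt' size_map size_tuple eqxx (prefix0_ascent_avoider avt').
case/and3P => avs /eqP sz _.
have lt_s x : x \in s -> x < n.+1.
  by rewrite -[n.+1]sz; exact: ascent_seq_ltn_size (andP avs).1.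
have ss : size (map (@inord n) s) == n.+1 by rewrite size_map sz.
have sE : map val (Tuple ss) = s.
  by rewrite /= -map_comp map_id_in // => x /lt_s /inordK.
by exists (Tuple ss); rewrite ?mem_enum ?inE /= sE.
Qed.

End GeneratingTree.

(** * Ladders *)

Lemma subseq_iota (w : seq nat) n : sorted ltn w -> all (gtn n) w -> subseq w (iota 0 n).
Proof.
move=> sw /allP wn; have -> : w = [seq x <- iota 0 n | x \in w].
  apply: (irr_sorted_eq ltn_trans ltnn sw) => [|x].
    exact: (@sorted_filter _ ltn ltn_trans _ _ (iota_ltn_sorted 0 n)).
  rewrite mem_filter mem_iota leq0n add0n; case xw: (x \in w) => //=; exact: esym (wn x xw).
exact: filter_subseq.
Qed.

(* All non-binary avoiders are ladders: their letters climb 0, 1, ..., k, using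
   all their ascents; [r] records which repetitions and descents the shape allows. *)
Definition ladder (k : nat) (r : rel nat) (s : seq nat) : Prop :=
  [/\ all (leq^~ k) s, subseq (iota 0 k.+1) s, pairwise r s & asc s = k].

Section Ladder.

Variables (k : nat) (r : rel nat) (s : seq nat).
Hypothesis ls : ladder k r s.

Lemma ladder_nonnil : s != [::].
Proof. by case: ls => _ /size_subseq; rewrite size_iota; case: s. Qed.

Lemma ladder_last : last 0 s <= k.
Proof.
case: ls => /allP bs _ _ _; apply: bs.
by case: s ladder_nonnil => // a t _; exact: mem_last.
Qed.

Lemma ladder_triple a b c : subseq [:: a; b; c] s ->
  [&& a <= k, b <= k, c <= k, r a b, r a c & r b c].
Proof.
case: ls => bs _ rs _ abc; have := subseq_pairwise abc rs; have := all_subseq3 bs abc.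
by rewrite /= !andbT => /and3P [-> -> ->] /andP [/andP [-> ->] ->].
Qed.

Lemma ladder_subseq w : sorted ltn w -> all (leq^~ k) w -> subseq w s.
Proof.
case: ls => _ cs _ _ sw wk; apply: subseq_trans cs; apply: subseq_iota sw _.
by apply: sub_all wk => x /=; rewrite ltnS.
Qed.

Lemma ladder_stay r' v : subrel r r' -> v <= last 0 s -> (forall x, x <= k -> r' x v) ->
  ladder k r' (rcons s v).
Proof.
case: ls => bs cs rs sk rr' vs r'v; split.
- by rewrite all_rcons bs andbT (leq_trans vs ladder_last).
- exact: subseq_rcons_r.
- rewrite pairwise_rcons (sub_pairwise rr' rs) andbT.
  by apply/allP => x /(allP bs); exact: r'v.
- by rewrite asc_rcons ?ladder_nonnil // sk ltnNge vs addn0.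
Qed.

Lemma ladder_climb r' : subrel r r' -> (forall x, x <= k -> r' x k.+1) ->
  ladder k.+1 r' (rcons s k.+1).
Proof.
case: ls => bs cs rs sk rr' r'k; split.
- by rewrite all_rcons leqnn; apply: sub_all bs => x /= /leqW.
- by rewrite -[k.+2]addn1 iotaD cats1 -!cats1 subseq_cat2r.
- rewrite pairwise_rcons (sub_pairwise rr' rs) andbT.
  by apply/allP => x /(allP bs); exact: r'k.
- by rewrite asc_rcons ?ladder_nonnil // sk ltnS ladder_last addn1.
Qed.

Lemma ladder_extendable P v : v <= k.+1 ->
  (forall a b c, [&& a <= k, b <= k, c <= k, r a b, r a c & r b c] ->
    red [:: a; b; c; v] \notin P) ->
  extendable P s v.
Proof.
case: ls => _ _ _ sk vk abc; split; first by rewrite sk.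
by move=> a b c /ladder_triple; exact: abc.
Qed.

End Ladder.

(** * The sets {0102, 0112, 0120} and {0102, 0112, 0121} *)

Definition inc0 (x y : nat) : bool := (x < y) || (x == 0) && (y == 0).
Definition inc0_top (k x y : nat) : bool := (x < y) || (x == y) && ((x == 0) || (x == k)).
Definition inc0_drop (k x y : nat) : bool :=
  [|| x < y, (x == y) && [|| x == 0, x == k.-1 | x == k] | (x == k) && (y == k.-1)].

Definition trans12 (t : nat) : seq nat :=
  match t with
  | 0 => [:: 0; 1] | 1 => [:: 2; 2; 3] | 2 => [:: 2; 2]
  | 3 => [:: 5; 4; 3] | 4 => [:: 5; 4] | 5 => [:: 5] | _ => [::]
  end.

Lemma level12_1 n : level_size trans12 1 n = 2 ^ n + 'C(n.+1, 2).
Proof.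
have t5 m : level_size trans12 5 m = 1 by exact: level_size_loop.
have t4 m : level_size trans12 4 m = m.+1 by elim: m => //= m ->; rewrite t5; lia.
have t3 m : level_size trans12 3 m = 'C(m.+2, 2).
  by elim: m => //= m ->; rewrite t5 t4 [in RHS]binS bin1; lia.
have t2 m : level_size trans12 2 m = 2 ^ m by exact: level_size_double.
by case: n => //= n; rewrite t2 t3 expnS; lia.
Qed.

Section TreeP12.

Variables (inv5 : nat -> seq nat -> Prop) (d : nat -> nat).

(* Label 0: 0^a; label 1: 0^a 1; label 2: the other binary sequences;
   label 3: 0^a 1 2 ... k; label 4: 0^a 1 2 ... k k^b; label 5: sequences of
   label 3 or 4 followed by letters [d k], namely k-1 for the first set and 0
   for the second (a, b >= 1, k >= 2). *)
Definition inv12 (s : seq nat) (st : nat * nat) : Prop :=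
  let: (t, k) := st in
  match t with
  | 0 => ladder 0 inc0 s
  | 1 => ladder 1 inc0 s
  | 2 => all (leq^~ 1) s /\ (subseq [:: 0; 1; 0] s || subseq [:: 0; 1; 1] s)
  | 3 => [/\ 2 <= k, ladder k inc0 s & last 0 s = k]
  | 4 => [/\ 2 <= k, ladder k (inc0_top k) s, subseq [:: 0; k; k] s & last 0 s = k]
  | 5 => inv5 k s
  | _ => False
  end.

Definition succ12 (st : nat * nat) : seq (nat * (nat * nat)) :=
  let: (t, k) := st in
  match t with
  | 0 => [:: (0, (0, 0)); (1, (1, 1))]
  | 1 => [:: (0, (2, 0)); (1, (2, 0)); (2, (3, 2))]
  | 2 => [:: (0, (2, 0)); (1, (2, 0))]
  | 3 => [:: (d k, (5, k)); (k, (4, k)); (k.+1, (3, k.+1))]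
  | 4 => [:: (d k, (5, k)); (k, (4, k))]
  | 5 => [:: (d k, (5, k))]
  | _ => [::]
  end.

Lemma lab_succ12 st : [seq q.2.1 | q <- succ12 st] = trans12 st.1.
Proof. by case: st => [[|[|[|[|[|[|t]]]]]] k]. Qed.

Hypothesis d_lt : forall k, 2 <= k -> d k < k.

Lemma succ12_uniq s st : inv12 s st -> uniq (map fst (succ12 st)).
Proof.
case: st => [[|[|[|[|[|[|t]]]]]] k] //=; rewrite ?inE //.
- by case=> /d_lt; lia.
- by case=> /d_lt; lia.
Qed.

Hypothesis inv5_from3 : forall s k,
  2 <= k -> ladder k inc0 s -> last 0 s = k -> inv5 k (rcons s (d k)).
Hypothesis inv5_from4 : forall s k, 2 <= k -> ladder k (inc0_top k) s ->
  subseq [:: 0; k; k] s -> last 0 s = k -> inv5 k (rcons s (d k)).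
Hypothesis inv5_rcons : forall s k, inv5 k s -> inv5 k (rcons s (d k)).

Lemma inv12_succ s st q : inv12 s st -> q \in succ12 st -> inv12 (rcons s q.1) q.2.
Proof.
case: st => [[|[|[|[|[|[|t]]]]]] k] //=; rewrite !inE.
- move=> L /orP [] /eqP -> /=.
    by apply: (ladder_stay L) => // x; rewrite /inc0; lia.
  by apply: (ladder_climb L) => // x; rewrite /inc0; lia.
- move=> L; have [b1 c1 _ _] := L; case/or3P => /eqP -> /=.
  + by rewrite all_rcons b1 (subseq_rcons2 0 c1).
  + by rewrite all_rcons b1 (subseq_rcons2 1 c1) orbT.
  + split=> //; last by rewrite last_rcons.
    by apply: (ladder_climb L) => // x; rewrite /inc0; lia.
- by case=> b1 w /orP [] /eqP -> /=; rewrite all_rcons b1; split=> //;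
    case/orP: w => /subseq_rcons_r -> //; rewrite orbT.
- case=> k2 L lk; case/or3P => /eqP -> /=; first exact: inv5_from3.
  + split=> //; last by rewrite last_rcons.
      by apply: (ladder_stay L) => [x y | | x]; rewrite /inc0 /inc0_top ?lk; lia.
    by apply: (subseq_rcons2 (w := [:: 0; k])); apply: (ladder_subseq L) => /=; lia.
  + split; [lia | | by rewrite last_rcons].
    by apply: (ladder_climb L) => // x; rewrite /inc0; lia.
- case=> k2 L kk lk; case/orP => /eqP -> /=; first exact: inv5_from4.
  split=> //; last by rewrite last_rcons.
    by apply: (ladder_stay L) => [x y | | x]; rewrite /inc0_top ?lk; lia.
  exact: subseq_rcons_r.
- by move=> I /eqP -> /=; exact: inv5_rcons.
Qed.

End TreeP12.

Definition P1 := [:: [:: 0; 1; 0; 2]; [:: 0; 1; 1; 2]; [:: 0; 1; 2; 0]].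

Lemma P1E a b c d : (red [:: a; b; c; d] \in P1) =
  [|| [&& a == c, a < b & b < d], [&& a < b, b == c & c < d] | [&& a == d, a < b & b < c]].
Proof. by rewrite !inE red_0102 red_0112 red_0120. Qed.

Definition inv1_top (k : nat) (s : seq nat) : Prop :=
  [/\ 2 <= k, ladder k (inc0_drop k) s, subseq [:: 0; k.-1; k.-1] s & last 0 s = k.-1].

Definition inv1 := inv12 inv1_top.
Definition succ1 := succ12 predn.

Lemma succ1P s st v : inv1 s st -> extendable P1 s v <-> v \in map fst (succ1 st).
Proof.
case: st => [[|[|[|[|[|[|t]]]]]] k] //=; rewrite !inE.
- move=> L; have [_ _ _ sk] := L; split=> [[] | ]; first by rewrite sk; lia.
  by case/orP => /eqP ->; apply: (ladder_extendable L) => // a b c; rewrite P1E /inc0; lia.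
- move=> L; have [_ _ _ sk] := L; split=> [[] | ]; first by rewrite sk; lia.
  by case/or3P => /eqP ->; apply: (ladder_extendable L) => // a b c; rewrite P1E /inc0; lia.
- case=> b1 w; split=> [[_ no] | v01]; first by case/orP: w => /no; rewrite P1E; lia.
  by split=> [| a b c /(all_subseq3 b1)]; rewrite ?P1E; lia.
- case=> k2 L lk; have [_ _ _ sk] := L; split=> [[vk no] | ]; last first.
    by case/or3P => /eqP ->; apply: (ladder_extendable L) => [|a b c]; rewrite ?P1E /inc0; lia.
  case: (ltnP v k.-1) => [vk1 | ]; last by rewrite sk in vk; lia.
  have /no : subseq [:: v; k.-1; k] s by apply: (ladder_subseq L) => /=; lia.
  by rewrite P1E; lia.
- case=> k2 L kk lk; have [_ _ _ sk] := L; split=> [[vk no] | ]; last first.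
    by case/orP => /eqP ->; apply: (ladder_extendable L) => [|a b c];
      rewrite ?P1E /inc0_top; lia.
  case: (ltnP v k.-1) => [vk1 | ]; last by move: (no _ _ _ kk); rewrite sk P1E in vk *; lia.
  have /no : subseq [:: v; k.-1; k] s by apply: (ladder_subseq L) => /=; lia.
  by rewrite P1E; lia.
- case=> k2 L w lk; have [_ _ _ sk] := L; split=> [[vk no] | ]; last first.
    by move/eqP ->; apply: (ladder_extendable L) => [|a b c]; rewrite ?P1E /inc0_drop; lia.
  case: (ltnP v k.-1) => [vk1 | ]; last by move: (no _ _ _ w); rewrite P1E; lia.
  have /no : subseq [:: v; k.-1; k] s by apply: (ladder_subseq L) => /=; lia.
  by rewrite P1E; lia.
Qed.

Lemma inv1_succ s st q : inv1 s st -> q \in succ1 st -> inv1 (rcons s q.1) q.2.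
Proof.
apply: inv12_succ => [s' k k2 L lk | s' k k2 L kk lk | s' k [k2 L w lk]].
- split=> //; last by rewrite last_rcons.
    by apply: (ladder_stay L) => [x y | | x]; rewrite /inc0 /inc0_drop ?lk; lia.
  by apply: (subseq_rcons2 (w := [:: 0; k.-1])); apply: (ladder_subseq L) => /=; lia.
- split=> //; last by rewrite last_rcons.
    by apply: (ladder_stay L) => [x y | | x]; rewrite /inc0_top /inc0_drop ?lk; lia.
  by apply: (subseq_rcons2 (w := [:: 0; k.-1])); apply: (ladder_subseq L) => /=; lia.
- split=> //; last by rewrite last_rcons.
    by apply: (ladder_stay L) => [x y | | x]; rewrite /inc0_drop ?lk; lia.
  exact: subseq_rcons_r.
Qed.

Lemma a_P1 n : a_P P1 n.+1 = 2 ^ n + 'C(n.+1, 3).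
Proof.
rewrite (@a_P_level _ P1 _ _ isT succ1P inv1_succ _ fst trans12 (lab_succ12 _) (0, 0)).
- exact: level_size_root level12_1.
- by apply: succ12_uniq => k; lia.
- by split.
Qed.

Definition P2 := [:: [:: 0; 1; 0; 2]; [:: 0; 1; 1; 2]; [:: 0; 1; 2; 1]].

Lemma P2E a b c d : (red [:: a; b; c; d] \in P2) =
  [|| [&& a == c, a < b & b < d], [&& a < b, b == c & c < d] | [&& a < b, b == d & b < c]].
Proof. by rewrite !inE red_0102 red_0112 red_0121. Qed.

Definition inv2_top (k : nat) (s : seq nat) : Prop :=
  [/\ 2 <= k, subseq [:: 0; 1; k] s & subseq [:: 0; 1; 0] s].

Definition inv2 := inv12 inv2_top.
Definition succ2 := succ12 (fun=> 0).

Lemma succ2P s st v : inv2 s st -> extendable P2 s v <-> v \in map fst (succ2 st).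
Proof.
case: st => [[|[|[|[|[|[|t]]]]]] k] //=; rewrite !inE.
- move=> L; have [_ _ _ sk] := L; split=> [[] | ]; first by rewrite sk; lia.
  by case/orP => /eqP ->; apply: (ladder_extendable L) => // a b c; rewrite P2E /inc0; lia.
- move=> L; have [_ _ _ sk] := L; split=> [[] | ]; first by rewrite sk; lia.
  by case/or3P => /eqP ->; apply: (ladder_extendable L) => // a b c; rewrite P2E /inc0; lia.
- case=> b1 w; split=> [[_ no] | v01]; first by case/orP: w => /no; rewrite P2E; lia.
  by split=> [| a b c /(all_subseq3 b1)]; rewrite ?P2E; lia.
- case=> k2 L lk; have [_ _ _ sk] := L; split=> [[vk no] | ]; last first.
    by case/or3P => /eqP ->; apply: (ladder_extendable L) => [|a b c]; rewrite ?P2E /inc0; lia.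
  case: (boolP (0 < v < k)) => [vk' | ]; last by rewrite sk in vk; lia.
  have /no : subseq [:: 0; v; k] s by apply: (ladder_subseq L) => /=; lia.
  by rewrite P2E; lia.
- case=> k2 L kk lk; have [_ _ _ sk] := L; split=> [[vk no] | ]; last first.
    by case/orP => /eqP ->; apply: (ladder_extendable L) => [|a b c];
      rewrite ?P2E /inc0_top; lia.
  case: (boolP (0 < v < k)) => [vk' | ]; last first.
    by move: (no _ _ _ kk); rewrite sk P2E in vk *; lia.
  have /no : subseq [:: 0; v; k] s by apply: (ladder_subseq L) => /=; lia.
  by rewrite P2E; lia.
- case=> k2 w1k w10; split=> [[_ no] | /eqP ->].
    by move: (no _ _ _ w1k) (no _ _ _ w10); rewrite !P2E; lia.
  by split=> // a b c _; rewrite P2E; lia.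
Qed.

Lemma inv2_top_rcons0 k r s : 2 <= k -> ladder k r s -> inv2_top k (rcons s 0).
Proof.
move=> k2 L; split=> //.
  by apply: subseq_rcons_r; apply: (ladder_subseq L) => /=; lia.
by apply: (subseq_rcons2 (w := [:: 0; 1])); apply: (ladder_subseq L) => /=; lia.
Qed.

Lemma inv2_succ s st q : inv2 s st -> q \in succ2 st -> inv2 (rcons s q.1) q.2.
Proof.
apply: inv12_succ => [s1 k k2 L _ | s1 k k2 L _ _ | s1 k [k2 w1k w10]].
- exact: inv2_top_rcons0 k2 L.
- exact: inv2_top_rcons0 k2 L.
- by split=> //; apply: subseq_rcons_r.
Qed.

Lemma a_P2 n : a_P P2 n.+1 = 2 ^ n + 'C(n.+1, 3).
Proof.
rewrite (@a_P_level _ P2 _ _ isT succ2P inv2_succ _ fst trans12 (lab_succ12 _) (0, 0)).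
- exact: level_size_root level12_1.
- by apply: succ12_uniq => k; lia.
- by split.
Qed.

(** * The set {0112, 0120, 0121} *)

Definition rep0 (x y : nat) : bool := (x != y) || (x == 0).
Definition rep0_top (k x y : nat) : bool := [|| x != y, x == 0 | x == k].

Definition trans3 (t : nat) : seq nat :=
  match t with
  | 0 => [:: 0; 1] | 1 => [:: 1; 2; 3] | 2 => [:: 2; 2]
  | 3 => [:: 4; 3] | 4 => [:: 4] | _ => [::]
  end.

Lemma level3_1 n : level_size trans3 1 n = 2 ^ n + 'C(n.+1, 2).
Proof.
have t4 m : level_size trans3 4 m = 1 by exact: level_size_loop.
have t3 m : level_size trans3 3 m = m.+1 by elim: m => //= m ->; rewrite t4; lia.
have t2 m : level_size trans3 2 m = 2 ^ m by exact: level_size_double.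
elim: n => //= n; rewrite t2 t3 => ->.
by rewrite [in RHS]binS bin1 expnS; lia.
Qed.

Definition P3 := [:: [:: 0; 1; 1; 2]; [:: 0; 1; 2; 0]; [:: 0; 1; 2; 1]].

Lemma P3E a b c d : (red [:: a; b; c; d] \in P3) =
  [|| [&& a < b, b == c & c < d], [&& a == d, a < b & b < c] | [&& a < b, b == d & b < c]].
Proof. by rewrite !inE red_0112 red_0120 red_0121. Qed.

(* Label 0: 0^a; label 1: 0^a 1 0^b; label 2: the binary sequences containing
   0 1 1; label 3: 0^a 1 0^b 2 3 ... k; label 4: those followed by k^c (c >= 1). *)
Definition inv3 (s : seq nat) (st : nat * nat) : Prop :=
  let: (t, k) := st in
  match t with
  | 0 => ladder 0 rep0 s
  | 1 => ladder 1 rep0 s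
  | 2 => all (leq^~ 1) s /\ subseq [:: 0; 1; 1] s
  | 3 => [/\ 2 <= k, ladder k rep0 s & last 0 s = k]
  | 4 => [/\ 2 <= k, ladder k (rep0_top k) s, subseq [:: 0; k; k] s & last 0 s = k]
  | _ => False
  end.

Definition succ3 (st : nat * nat) : seq (nat * (nat * nat)) :=
  let: (t, k) := st in
  match t with
  | 0 => [:: (0, (0, 0)); (1, (1, 1))]
  | 1 => [:: (0, (1, 1)); (1, (2, 0)); (2, (3, 2))]
  | 2 => [:: (0, (2, 0)); (1, (2, 0))]
  | 3 => [:: (k, (4, k)); (k.+1, (3, k.+1))]
  | 4 => [:: (k, (4, k))]
  | _ => [::]
  end.

Lemma succ3P s st v : inv3 s st -> extendable P3 s v <-> v \in map fst (succ3 st).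
Proof.
case: st => [[|[|[|[|[|t]]]]] k] //=; rewrite !inE.
- move=> L; have [_ _ _ sk] := L; split=> [[] | ]; first by rewrite sk; lia.
  by case/orP => /eqP ->; apply: (ladder_extendable L) => // a b c; rewrite P3E /rep0; lia.
- move=> L; have [_ _ _ sk] := L; split=> [[] | ]; first by rewrite sk; lia.
  by case/or3P => /eqP ->; apply: (ladder_extendable L) => // a b c; rewrite P3E /rep0; lia.
- case=> b1 w; split=> [[_ no] | v01]; first by move: (no _ _ _ w); rewrite P3E; lia.
  by split=> [| a b c /(all_subseq3 b1)]; rewrite ?P3E; lia.
- case=> k2 L lk; have [_ _ _ sk] := L; split=> [[vk no] | ]; last first.
    by case/orP => /eqP ->; apply: (ladder_extendable L) => [|a b c]; rewrite ?P3E /rep0; lia.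
  case: (ltnP v k) => [vk' | ]; last by rewrite sk in vk; lia.
  (* an occurrence of 0120 if v = 0, of 0121 otherwise *)
  have /no : subseq [:: 0; maxn 1 v; k] s by apply: (ladder_subseq L) => /=; lia.
  by rewrite P3E; lia.
- case=> k2 L kk lk; have [_ _ _ sk] := L; split=> [[vk no] | ]; last first.
    by move/eqP ->; apply: (ladder_extendable L) => [|a b c]; rewrite ?P3E /rep0_top; lia.
  case: (ltnP v k) => [vk' | ]; last by move: (no _ _ _ kk); rewrite sk P3E in vk *; lia.
  have /no : subseq [:: 0; maxn 1 v; k] s by apply: (ladder_subseq L) => /=; lia.
  by rewrite P3E; lia.
Qed.

Lemma inv3_succ s st q : inv3 s st -> q \in succ3 st -> inv3 (rcons s q.1) q.2.
Proof.
case: st => [[|[|[|[|[|t]]]]] k] //=; rewrite !inE.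
- move=> L /orP [] /eqP -> /=.
    by apply: (ladder_stay L) => // x; rewrite /rep0; lia.
  by apply: (ladder_climb L) => // x; rewrite /rep0; lia.
- move=> L; have [b1 c1 _ _] := L; case/or3P => /eqP -> /=.
  + by apply: (ladder_stay L) => // x; rewrite /rep0; lia.
  + by rewrite all_rcons b1 (subseq_rcons2 1 c1).
  + split=> //; last by rewrite last_rcons.
    by apply: (ladder_climb L) => // x; rewrite /rep0; lia.
- by case=> b1 w /orP [] /eqP -> /=; rewrite all_rcons b1 subseq_rcons_r.
- case=> k2 L lk /orP [] /eqP -> /=.
    split=> //; last by rewrite last_rcons.
      by apply: (ladder_stay L) => [x y | | x]; rewrite /rep0 /rep0_top ?lk; lia.
    by apply: (subseq_rcons2 (w := [:: 0; k])); apply: (ladder_subseq L) => /=; lia.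
  split; [lia | | by rewrite last_rcons].
  by apply: (ladder_climb L) => // x; rewrite /rep0; lia.
- case=> k2 L kk lk /eqP -> /=; split=> //; last by rewrite last_rcons.
    by apply: (ladder_stay L) => [x y | | x]; rewrite /rep0_top ?lk; lia.
  exact: subseq_rcons_r.
Qed.

Lemma succ3_uniq s st : inv3 s st -> uniq (map fst (succ3 st)).
Proof. by case: st => [[|[|[|[|[|t]]]]] k] //=; rewrite !inE; lia. Qed.

Lemma a_P3 n : a_P P3 n.+1 = 2 ^ n + 'C(n.+1, 3).
Proof.
rewrite (@a_P_level _ P3 _ _ isT succ3P inv3_succ succ3_uniq fst trans3 _ (0, 0)).
- exact: level_size_root level3_1.
- by case=> [[|[|[|[|[|t]]]]] k].
- by split.
Qed.

Theorem theorem4p2 (n : nat) : 1 <= n ->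
  a_P [:: [:: 0; 1; 0; 2]; [:: 0; 1; 1; 2]; [:: 0; 1; 2; 0]] n = 2 ^ n.-1 + 'C(n, 3) /\
  a_P [:: [:: 0; 1; 0; 2]; [:: 0; 1; 1; 2]; [:: 0; 1; 2; 1]] n = 2 ^ n.-1 + 'C(n, 3) /\
  a_P [:: [:: 0; 1; 1; 2]; [:: 0; 1; 2; 0]; [:: 0; 1; 2; 1]] n = 2 ^ n.-1 + 'C(n, 3).
Proof. by case: n => // n _; rewrite a_P1 a_P2 a_P3. Qed.
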